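(* Let $A$ be a finite alphabet. If $d: A^n \to A$ is a weakly progressive block map, then the induced sliding block code $\tau_d: A^{\mathbb{N}} \to A^{\mathbb{N}}$ is a local homeomorphism.
   Context: $A$ is a finite set with the discrete topology; $\mathbb{N}=\{1,2,3,\dots\}$; $A^{\mathbb{N}}$ is the space of one-sided infinite sequences over $A$ with the product topology; $A^k$ is the set of words of length $k$. A block map is a function $d: A^n \to A$, and the induced sliding block code $\tau_d: A^{\mathbb{N}}\to A^{\mathbb{N}}$ is defined by $\tau_d(x)_i = d(x_i \cdots x_{i+n-1})$. For $w=w_1\cdots w_{n-1}\in A^{n-1}$ and $m\in\mathbb{N}$, define $p_{d,m}^{w}: A^m\to A^m$ by letting, for $\beta\in A^m$, the $j$-th letter ($1\le j\le m$) of $p_{d,m}^{w}(\beta)$ be $d$ applied to the subword of length $n$ starting at position $j$ of the concatenated word $w\beta$ (so $p_{d,m}^{w}(a\alpha)=d(w_1\cdots w_{n-1}a)\,d(w_2\cdots w_{n-1}a\alpha_1)\cdots$). The block map $d$ is weakly progressive of order $m$ if for every $\mu \in A^n$ and every $\nu \in A^m$ with $d(\mu)= \nu_1$ there exists a unique $a \in A$ such that the equation $p_{d,m}^{\mu_1 \cdots \mu_{n-1}}(a \alpha)=\nu$ has a solution $\alpha \in A^{m-1}$; $d$ is weakly progressive if it is weakly progressive of order $m$ for some $m$. A continuous map $f:X\to Y$ is a local homeomorphism if every $x\in X$ has an open neighborhood $U$ such that $f(U)$ is open in $Y$ and $f:U\to f(U)$ is a homeomorphism. *)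

From mathcomp Require Import all_boot.
Set Implicit Arguments. Unset Strict Implicit. Unset Printing Implicit Defensive.

Section Defs.
Variable A : finType.

(* A^N : one-sided sequences, indexed from 0 (position i+1 of the paper is i here). *)
Definition seqA := nat -> A.

(* Product topology of the discrete topology on A: U is open iff every point of U
   has a cylinder neighbourhood (agreement on an initial segment) inside U. *)
Definition is_open (U : seqA -> Prop) : Prop :=
  forall x, U x -> exists k, forall y, (forall i, i < k -> y i = x i) -> U y.

Definition image (f : seqA -> seqA) (U : seqA -> Prop) : seqA -> Prop :=
  fun y => exists x, U x /\ f x = y.

Definition rel_open (S W : seqA -> Prop) : Prop :=
  exists O, is_open O /\ forall x, W x <-> (O x /\ S x).

Definition continuous_map (f : seqA -> seqA) : Prop :=
  forall V, is_open V -> is_open (fun x => V (f x)).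

Definition homeo_onto_image (f : seqA -> seqA) (U : seqA -> Prop) : Prop :=
  [/\ (forall y z, U y -> U z -> f y = f z -> y = z),
      (forall V, rel_open (image f U) V -> rel_open U (fun y => U y /\ V (f y)))
    & (forall W, rel_open U W -> rel_open (image f U) (image f W))].

Definition local_homeomorphism (f : seqA -> seqA) : Prop :=
  continuous_map f /\
  forall x, exists U, [/\ is_open U, U x, is_open (image f U) & homeo_onto_image f U].

Variable n : nat.

Definition tau (d : n.-tuple A -> A) (x : seqA) : seqA :=
  fun i => d [tuple x (i + k) | k < n].

(* p_{d,m}^w(beta): j-th letter (0-based) is d applied to the length-n subword of
   w ++ beta starting at position j; m = size beta.  x0 is an irrelevant default
   (all indices used are in range when size w = n-1). *)
Definition pdm (d : n.-tuple A -> A) (x0 : A) (w beta : seq A) : seq A :=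
  [seq d [tuple nth x0 (w ++ beta) (j + k) | k < n] | j <- iota 0 (size beta)].

Definition weakly_progressive_of_order (d : n.-tuple A -> A) (m : nat) : Prop :=
  forall (mu : n.-tuple A) (nu : seq A), size nu = m -> ohead nu = Some (d mu) ->
    exists! a : A, exists alpha : seq A,
      size alpha = m.-1 /\ pdm d (d mu) (take n.-1 mu) (a :: alpha) = nu.

Definition weakly_progressive (d : n.-tuple A -> A) : Prop :=
  exists m, 0 < m /\ weakly_progressive_of_order d m.

End Defs.

(* Fix the first n-1 letters of x.  Weak progressiveness says that the letter
   following a window is determined by m letters of the image (uniqueness) and
   that every image word starting with an attainable letter is realised
   (existence).  Iterating uniqueness, two points of the cylinder whose images
   agree on k+m letters agree on k+n letters, so tau is injective on the
   cylinder.  Iterating existence, every y with y_0 = tau(x)_0 lifts to a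
   preimage starting like x; with the previous bound this makes tau an open map,
   and a continuous open map injective on an open set is a homeomorphism onto
   its image. *)

From Pilot Require Import Defs.
From mathcomp Require Import all_boot zify.
From Stdlib Require Import FunctionalExtensionality.
Set Implicit Arguments. Unset Strict Implicit. Unset Printing Implicit Defensive.

Definition agree (T : Type) (k : nat) (x y : nat -> T) := forall i, i < k -> x i = y i.

Lemma agreeW T k l (x y : nat -> T) : k <= l -> agree l x y -> agree k x y.
Proof. by move=> hkl h i hi; apply: h; apply: leq_trans hkl. Qed.

Lemma agree_mkseq T k (f g : nat -> T) : mkseq f k = mkseq g k <-> agree k f g.
Proof.
split=> [e i hi | h]; last first.
  by apply/eq_in_map => i; rewrite mem_iota => /andP[_ /h].
by have := congr1 (nth (f 0) ^~ i) e; rewrite !nth_mkseq.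
Qed.

Lemma mkseq_cons T (f : nat -> T) k : mkseq f k.+1 = f 0 :: mkseq (fun l => f l.+1) k.
Proof. by rewrite /mkseq /= -[1]/(1 + 0) iotaDl -map_comp. Qed.

Lemma ohead_mkseq T (f : nat -> T) k : 0 < k -> ohead (mkseq f k) = Some (f 0).
Proof. by case: k. Qed.

Lemma agree_open (A : finType) k (x : seqA A) : is_open (fun y => agree k y x).
Proof. by move=> y hy; exists k => z hz i hi; rewrite hz // hy. Qed.

Lemma openI (A : finType) (S T : seqA A -> Prop) :
  is_open S -> is_open T -> is_open (fun x => S x /\ T x).
Proof.
move=> hS hT x [/hS [k1 h1] /hT [k2 h2]]; exists (k1 + k2) => y hy.
by split; [apply: h1 | apply: h2] => i hi; apply: hy; lia.
Qed.

Lemma homeo_onto_image_open_map (A : finType) (f : seqA A -> seqA A) (U : seqA A -> Prop) :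
  continuous_map f -> (forall S, is_open S -> is_open (Defs.image f S)) -> is_open U ->
  (forall y z, U y -> U z -> f y = f z -> y = z) -> homeo_onto_image f U.
Proof.
move=> f_cont f_open U_open f_inj; split=> // [V [O [hO hV]] | W [O [hO hW]]].
  exists (fun y => O (f y)); split; first exact: f_cont.
  move=> y; split=> [[_ /hV []] // | [hO' hy]].
  by split=> //; apply/hV; split=> //; exists y.
exists (Defs.image f W); split.
  move=> _ [w [/hW Ww <-]].
  have [k hk] := f_open _ (openI hO U_open) (f w) (ex_intro _ w (conj Ww erefl)).
  by exists k => y /hk [v [hv <-]]; exists v; split=> //; apply/hW.
move=> y; split=> [hy | [] //]; split=> //.
by case: hy => w [/hW [_ hw] <-]; exists w.
Qed.

Section Tau.
Variables (A : finType) (n : nat) (d : n.-tuple A -> A).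

Lemma tau_agree k (x x' : seqA A) : agree (k + n.-1) x x' -> agree k (tau d x) (tau d x').
Proof. by move=> h i hi; congr d; apply: eq_mktuple => j; apply: h; have := ltn_ord j; lia. Qed.

Lemma tau_shift i (x : seqA A) j : tau d (fun l => x (i + l)) j = tau d x (i + j).
Proof. by congr d; apply: eq_mktuple => k; rewrite addnA. Qed.

Lemma tau_continuous : continuous_map (tau d).
Proof. by move=> V hV x /hV [k hk]; exists (k + n.-1) => y hy; apply: hk; apply: tau_agree. Qed.

Lemma pdmE x0 (w beta : seq A) :
  pdm d x0 w beta = mkseq (tau d (nth x0 (w ++ beta))) (size beta).
Proof. by []. Qed.

Lemma take_tuple (z : seqA A) : take n.-1 [tuple z k | k < n] = mkseq z n.-1.
Proof.
by rewrite /= (map_comp z val) val_enum_ord -map_take take_iota (minn_idPl (leq_pred n)).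
Qed.

Lemma pdm_window x0 (z : seqA A) k :
  pdm d x0 (mkseq z n.-1) (mkseq (fun l => z (n.-1 + l)) k) = mkseq (tau d z) k.
Proof.
rewrite pdmE size_mkseq; apply/agree_mkseq/tau_agree => l hl.
rewrite nth_cat size_mkseq; case: ltnP => h; first by rewrite nth_mkseq.
by rewrite nth_mkseq ?subnKC //; lia.
Qed.
End Tau.

Section Progressive.
Variables (A : finType) (n : nat) (d : n.-tuple A -> A) (m : nat).
Hypotheses (m_gt0 : 0 < m) (wp : weakly_progressive_of_order d m).

Lemma wp_unique (z z' : seqA A) :
  agree n.-1 z z' -> agree m (tau d z) (tau d z') -> z n.-1 = z' n.-1.
Proof.
move=> hw ht.
have nu_size : size (mkseq (tau d z) m) = m by rewrite size_mkseq.
have [|a [_ a_unique]] := @wp [tuple z k | k < n] _ nu_size.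
  by rewrite ohead_mkseq.
have solves (z'' : seqA A) : agree n.-1 z z'' -> agree m (tau d z) (tau d z'') -> a = z'' n.-1.
  move=> hw'' ht''; apply: a_unique.
  exists (mkseq (fun l => z'' (n.-1 + l.+1)) m.-1); split; first by rewrite size_mkseq.
  have -> : z'' n.-1 :: mkseq (fun l => z'' (n.-1 + l.+1)) m.-1 =
            mkseq (fun l => z'' (n.-1 + l)) m.
    by rewrite -[in RHS](prednK m_gt0) mkseq_cons addn0.
  have -> : take n.-1 [tuple z k | k < n] = mkseq z'' n.-1.
    by rewrite take_tuple; apply/agree_mkseq.
  by rewrite pdm_window; apply/agree_mkseq => i /ht''.
by rewrite -(solves z) // -(solves z').
Qed.

Lemma wp_exists (z y : seqA A) :
  y 0 = tau d z 0 -> exists z', agree n.-1 z' z /\ agree m (tau d z') y.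
Proof.
move=> y0.
have nu_size : size (mkseq y m) = m by rewrite size_mkseq.
have [|a [[alpha [alpha_size e]] _]] := @wp [tuple z k | k < n] _ nu_size.
  by rewrite ohead_mkseq // y0.
rewrite take_tuple pdmE /= alpha_size prednK // in e.
exists (nth (d [tuple z k | k < n]) (mkseq z n.-1 ++ a :: alpha)); split.
  by move=> i hi; rewrite nth_cat size_mkseq hi nth_mkseq.
exact/agree_mkseq.
Qed.

Lemma agree_of_tau_agree k (x x' : seqA A) : agree n.-1 x x' ->
  agree (k + m.-1) (tau d x) (tau d x') -> agree (k + n.-1) x x'.
Proof.
move=> hw; elim: k => [//|k IH] ht.
have {IH}hk := IH (agreeW (leqnSn _) ht).
move=> i hi; case: (ltnP i (k + n.-1)) => [/hk //|hge].
have -> : i = k + n.-1 by lia.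
apply: (@wp_unique (fun l => x (k + l)) (fun l => x' (k + l))) => l hl.
  by apply: hk; lia.
by rewrite !tau_shift; apply: ht; lia.
Qed.

Lemma tau_inj_agree (x x' : seqA A) : agree n.-1 x x' -> tau d x = tau d x' -> x = x'.
Proof.
move=> hw e; apply: functional_extensionality => j.
by apply: (@agree_of_tau_agree j.+1 _ _ hw) => [i _|]; [rewrite e | lia].
Qed.

Definition ext (u : seqA A) (a b : A) : seqA A :=
  fun l => if l < n.-1 then u l else if l == n.-1 then a else b.

Lemma ext_step u b c : exists a b',
  tau d (ext u a b') 0 = tau d (ext u b b) 0 /\ tau d (ext u a b') 1 = c.
Proof.
case: (ltnP 1 m) => hm.
  pose y l := if l == 0 then tau d (ext u b b) 0 else c.
  have [z' [hw ht]] := @wp_exists (ext u b b) y erefl.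
  exists (z' n.-1), (z' n.-1.+1).
  have e : agree (2 + n.-1) (ext u (z' n.-1) (z' n.-1.+1)) z'.
    move=> l hl; rewrite /ext; case: ltnP => h1; first by rewrite hw // /ext h1.
    by case: eqP => [->//|h2]; congr z'; lia.
  by rewrite !(tau_agree d e) // (ht 0) // (ht 1).
(* For m = 1 a single image letter forces the next letter, so appending a letter
   is injective, hence onto. *)
have inj : injective (fun b' => tau d (ext u b b') 1).
  move=> b1 b2 /= e.
  have ext_n b' : ext u b b' (1 + n.-1) = b'.
    by rewrite /ext add1n ltnNge leqnSn eqn_leq ltnn.
  rewrite -(ext_n b1) -(ext_n b2).
  apply: (@wp_unique (fun l => ext u b b1 (1 + l)) (fun l => ext u b b2 (1 + l))).
    by move=> l hl; rewrite /ext; case: ifP => // h1; case: eqP => // h2; lia.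
  by move=> i hi; rewrite !tau_shift (_ : i = 0) //; lia.
have [g _ gK] := injF_bij inj.
exists b, (g c); split; last exact: gK.
apply: (tau_agree d (k := 1)) => // l hl; rewrite /ext.
by case: ifP => // h1; case: eqP => // h2; lia.
Qed.

Section Lift.
Variables x y : seqA A.
Hypothesis y0 : y 0 = tau d x 0.

(* The letter appended after the window [u] at stage [i]: it realises [y i]
   and still leaves room for [y i.+1], which ext_step guarantees is possible. *)
Definition next (i : nat) (u : seqA A) : A :=
  odflt (x 0) [pick a | [exists b,
    (tau d (ext u a b) 0 == y i) && (tau d (ext u a b) 1 == y i.+1)]].

Fixpoint window (i : nat) : seqA A :=
  if i is i'.+1 then fun l => if l.+1 < n.-1 then window i' l.+1 else next i' (window i')
  else x.

Definition lift (j : nat) : A :=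
  if j < n.-1 then x j else next (j - n.-1) (window (j - n.-1)).

Lemma window_lift i : agree n.-1 (window i) (fun l => lift (i + l)).
Proof.
elim: i => [|i IH] l hl /=; first by rewrite /lift hl.
case: ifP => h; first by rewrite IH // addSnnS.
by rewrite /lift ifN; [rewrite (_ : i.+1 + l - n.-1 = i) //|]; lia.
Qed.

Lemma next_spec i : (exists b, tau d (ext (window i) b b) 0 = y i) ->
  exists b, tau d (ext (window i) (next i (window i)) b) 0 = y i /\
            tau d (ext (window i) (next i (window i)) b) 1 = y i.+1.
Proof.
move=> [b hb]; rewrite /next; case: pickP => [a /existsP [b' /andP [/eqP h0 /eqP h1]] | none].
  by exists b'.
have [a [b' [h0 h1]]] := ext_step (window i) b (y i.+1).
by move: (none a) => /negbT/negP []; apply/existsP; exists b'; rewrite h0 hb h1 !eqxx.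
Qed.

Lemma window_invariant i : exists b, tau d (ext (window i) b b) 0 = y i.
Proof.
elim: i => [|i [b hb]].
  exists (x n.-1); rewrite y0; apply: (tau_agree d (k := 1)) => // l hl; rewrite /ext.
  by case: ifP => // h1; case: eqP => [->|h2] //; lia.
have [b' [_ h1]] := next_spec (ex_intro _ b hb).
exists b'; rewrite -h1 -[in RHS](addn0 1) -tau_shift.
apply: (tau_agree d (k := 1)) => // l hl; rewrite /ext /= add1n.
case: (ltnP l n.-1) => h3.
  by case: (ltnP l.+1 n.-1) => h4 //; rewrite ifT //; lia.
by case: (l == n.-1); rewrite !ifF //; lia.
Qed.

Lemma tau_lift : tau d lift = y.
Proof.
apply: functional_extensionality => i.
have [b [h0 _]] := next_spec (window_invariant i).
rewrite -h0 -[X in tau d lift X]addn0 -tau_shift; apply: (tau_agree d (k := 1)) => // l hl.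
case: (ltnP l n.-1) => h; first by rewrite /ext h -window_lift.
have -> : l = n.-1 by lia.
by rewrite /ext ltnn eqxx /lift ifN ?addnK //; lia.
Qed.

End Lift.

Lemma tau_lift_exists (x y : seqA A) :
  y 0 = tau d x 0 -> exists x', agree n.-1 x' x /\ tau d x' = y.
Proof.
move=> y0; exists (lift x y); split; last exact: tau_lift.
by move=> l hl; rewrite /lift hl.
Qed.

Lemma tau_open (S : seqA A -> Prop) : is_open S -> is_open (Defs.image (tau d) S).
Proof.
move=> hS _ [x [Sx <-]]; have [k hk] := hS x Sx.
exists (k + m) => y hy.
have [|x' [hx' ex']] := @tau_lift_exists x y; first by apply: hy; lia.
exists x'; split=> //; apply: hk; apply: (agreeW _ (@agree_of_tau_agree k.+1 _ _ hx' _)).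
  by lia.
by rewrite ex' => i hi; apply: hy; lia.
Qed.

End Progressive.

Theorem theorem3p11 (A : finType) (n : nat) (d : n.-tuple A -> A) :
  0 < n -> weakly_progressive d -> local_homeomorphism (tau d).
Proof.
move=> _ [m [m_gt0 wp]]; split=> [|x]; first exact: tau_continuous.
have U_open := @agree_open A n.-1 x.
exists (fun y => agree n.-1 y x); split=> //; first exact: (tau_open m_gt0 wp).
apply: homeo_onto_image_open_map => //; [exact: tau_continuous | exact: (tau_open m_gt0 wp) |].
by move=> y z hy hz; apply: (tau_inj_agree m_gt0 wp) => i hi; rewrite hy ?hz.
Qed.
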